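(* Under the hypotheses of the context (in particular $A$ is $(c_A,\gamma_{sys})$-SED, $B$ is $(c_B,\gamma_{sys})$-SED with $c_A,c_B\ge1$, $K\in\mathcal{K}^\kappa$ is $(c_K,\gamma_{sys})$-SED and $A+BK$ is $(\tau,\rho)$-stable), let $P_i$ solve $P_i = S_i + [K]_{i:}^\top [R]_{ii}[K]_{i:} + (A+BK)^\top P_i (A+BK)$ and define $$H_{i11}=S_i + A^\top P_i A,\quad H_{i12}=A^\top P_i B,\quad H_{i22}=R_i + B^\top P_i B.$$ Then each of $H_{i11}$, $H_{i12}$, $H_{i22}$ is $(c_{H_i},\gamma_{P_i})$-SED away from $i$, where $$c_{H_i}=\max\big(\|S_i\| + N^2 c_A^2 c_{P_i},\; N^2 c_A c_B c_{P_i},\; \|R_i\| + N^2 c_B^2 c_{P_i}\big),$$ with $$c_{P_i} = \frac{\|S_i + [K]_{i:}^\top [R]_{ii}[K]_{i:}\|\,\tau^2}{1-e^{-2\rho}} + 2\big(\|[S]_{ii}\| + \|[R]_{ii}\|c_K^2\big),\qquad \gamma_{P_i} = \frac{\rho\,\gamma_{sys}}{\rho + \ln(N c_A + N^2 c_B c_K)}.$$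
   Context: $\|\cdot\|$ denotes the Euclidean norm / induced $\ell_2$ matrix norm. There are $N$ agents $[N]$ on an undirected graph with graph distance $\mathrm{dist}$ ($\mathrm{dist}(i,i)=0$, symmetric, triangle inequality). Agent $i$ has state dimension $n_i$ and input dimension $m_i$, $n=\sum_i n_i$, $m=\sum_i m_i$; matrices are partitioned into blocks $[X]_{lj}$ (rows of agent $l$, columns of agent $j$, using the $n$- or $m$-partition as appropriate); $[X]_{i:}$ is agent $i$'s block row. $A\in\mathbb{R}^{n\times n}$, $B\in\mathbb{R}^{n\times m}$, $\gamma_{sys}>0$, $\kappa\ge1$, $\mathcal{N}_i^\kappa=\{j:\mathrm{dist}(i,j)<\kappa\}$, $\mathcal{K}^\kappa=\{K\in\mathbb{R}^{m\times n}:[K]_{ij}=0 \text{ if } j\notin\mathcal{N}_i^\kappa\}$. $S$, $R$ are block-diagonal with $[S]_{ii}\succeq0$, $[R]_{ii}\succ0$; $S_i$ (resp. $R_i$) is $S$ (resp. $R$) with all blocks except the $(i,i)$ block set to zero. Definitions: $X$ is $(\tau,\rho)$-stable if $\|X^k\|\le\tau e^{-\rho k}$ for all $k\ge0$; $X$ is $(c,\gamma)$-SED if $\|[X]_{lj}\|\le c e^{-\gamma\,\mathrm{dist}(l,j)}$ for all $l,j$; $X$ is $(c,\gamma)$-SED away from $i$ if $\|[X]_{lj}\|\le c e^{-\gamma\max(\mathrm{dist}(i,l),\mathrm{dist}(i,j))}$ for all $l,j$. *)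

From HB Require Import structures.
From mathcomp Require Import all_boot all_order all_algebra.
From mathcomp Require Import all_classical all_reals all_analysis.
Set Implicit Arguments. Unset Strict Implicit. Unset Printing Implicit Defensive.
Import Order.TTheory GRing.Theory Num.Theory.
Local Open Scope classical_set_scope.
Local Open Scope ring_scope.

Section Defs.
Variable R : realType.

Definition vnorm (q : nat) (v : 'cV[R]_q) : R := Num.sqrt (\sum_k (v k 0) ^+ 2).

Definition opnorm (p q : nat) (X : 'M[R]_(p, q)) : R :=
  sup [set vnorm (X *m v) | v in [set v : 'cV[R]_q | vnorm v <= 1]].

Definition mx_stable (n : nat) (tau rho : R) (X : 'M[R]_n) : Prop :=
  forall k : nat, opnorm (X ^+ k) <= tau * expR (- rho * k%:R).

(* Matrices partitioned according to p_ (rows) and q_ (columns) over N agents.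
   Blocks [X]_{lj} are MathComp's submxblock. *)
Definition SED (N : nat) (dist : 'I_N -> 'I_N -> nat) (p_ q_ : 'I_N -> nat)
    (X : 'M[R]_((\sum_i p_ i)%N, (\sum_i q_ i)%N)) (c gamma : R) : Prop :=
  forall l j : 'I_N, opnorm (submxblock X l j) <= c * expR (- gamma * (dist l j)%:R).

Definition SED_away (N : nat) (dist : 'I_N -> 'I_N -> nat) (p_ q_ : 'I_N -> nat)
    (i : 'I_N) (X : 'M[R]_((\sum_i p_ i)%N, (\sum_i q_ i)%N)) (c gamma : R) : Prop :=
  forall l j : 'I_N, opnorm (submxblock X l j)
    <= c * expR (- gamma * (maxn (dist i l) (dist i j))%:R).

Definition block_diag (N : nat) (p_ : 'I_N -> nat)
    (X : 'M[R]_((\sum_i p_ i)%N, (\sum_i p_ i)%N)) : Prop :=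
  forall l j : 'I_N, l != j -> submxblock X l j = 0.

Definition keep_block (N : nat) (p_ : 'I_N -> nat) (i : 'I_N)
    (X : 'M[R]_((\sum_i p_ i)%N, (\sum_i p_ i)%N)) : 'M[R]_((\sum_i p_ i)%N) :=
  \mxblock_(l, j) (if (l == i) && (j == i) then submxblock X l j else 0).

Definition psd (q : nat) (X : 'M[R]_q) : Prop :=
  X^T = X /\ forall v : 'cV[R]_q, 0 <= (v^T *m X *m v) 0 0.
Definition pd (q : nat) (X : 'M[R]_q) : Prop :=
  X^T = X /\ forall v : 'cV[R]_q, v != 0 -> 0 < (v^T *m X *m v) 0 0.

Definition in_Kkappa (N : nat) (dist : 'I_N -> 'I_N -> nat) (kappa : nat)
    (m_ n_ : 'I_N -> nat) (K : 'M[R]_((\sum_i m_ i)%N, (\sum_i n_ i)%N)) : Prop :=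
  forall i j : 'I_N, (kappa <= dist i j)%N -> submxblock K i j = 0.

End Defs.

Arguments SED {R N} dist {p_ q_} X c gamma.
Arguments SED_away {R N} dist {p_ q_} i X c gamma.
Arguments in_Kkappa {R N} dist kappa {m_ n_} K.
Arguments keep_block {R N p_} i X.
Arguments block_diag {R N p_} X.

(* Let M = A + BK, which is (c, g)-SED with c = c_A + N c_B c_K, and let
   Q = S_i + K_i^T R_ii K_i. Unrolling the Lyapunov equation gives
   P = sum_(k < m) (M^k)^T Q M^k + (M^m)^T P M^m. The (l, j) block of Q is at most
   q0 e^(-g (d(i,l) + d(i,j))), and conjugation by the SED matrix M^k keeps this profile
   (triangle inequality) at the price of a factor (N c)^(2k); stability bounds the same
   term by tau^2 |Q| e^(-2 rho k) instead. Splitting the series at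
   k0 ~ g D / (2 (rho + ln (N c))), with D = max(d(i,l), d(i,j)), balances the two
   estimates and shows that P decays at rate gamma_P away from i. Each H is then P
   sandwiched between SED matrices, which preserves decay away from i at any rate
   gamma_P <= g. *)

From HB Require Import structures.
From mathcomp Require Import all_boot all_order all_algebra.
From mathcomp Require Import all_classical all_reals all_analysis.
From mathcomp Require Import ring lra zify.
Import Order.TTheory GRing.Theory Num.Theory.
Set Implicit Arguments. Unset Strict Implicit. Unset Printing Implicit Defensive.
Local Open Scope ring_scope.

Section VectorNorm.
Variable R : realType.

Lemma sumr_sqr_ge0 q (a : 'I_q -> R) : 0 <= \sum_k a k ^+ 2.
Proof. by apply: sumr_ge0 => k _; apply: sqr_ge0. Qed.

Lemma cauchy_schwarz q (a b : 'I_q -> R) :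
  (\sum_k a k * b k) ^+ 2 <= (\sum_k a k ^+ 2) * (\sum_k b k ^+ 2).
Proof.
set A := \sum_k a k ^+ 2; set B := \sum_k b k ^+ 2; set C := \sum_k a k * b k.
have B_ge0 : 0 <= B := sumr_sqr_ge0 b.
(* [B (A B - C^2)] is the squared length of [B a - C b]. *)
have key : 0 <= B * (A * B - C ^+ 2).
  have -> : B * (A * B - C ^+ 2) = \sum_k (B * a k - C * b k) ^+ 2.
    rewrite (eq_bigr (fun k => B ^+ 2 * a k ^+ 2 - (2 * B * C) * (a k * b k)
       + C ^+ 2 * b k ^+ 2)); last by move=> k _; ring.
    by rewrite big_split /= sumrB -!mulr_sumr -/A -/B -/C; ring.
  exact: sumr_sqr_ge0.
have [B0 | B_neq0] := eqVneq B 0.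
  have b0 k : b k = 0.
    apply/eqP; rewrite -sqrf_eq0; apply/eqP.
    by apply: (psumr_eq0P _ B0) => // j _; apply: sqr_ge0.
  have -> : C = 0 by rewrite /C big1 // => k _; rewrite b0 mulr0.
  by rewrite B0 expr0n /= mulr0.
by rewrite -subr_ge0; move: key; rewrite pmulr_rge0 // lt_def B_neq0.
Qed.

Lemma vnorm_ge0 q (v : 'cV[R]_q) : 0 <= vnorm v.
Proof. exact: sqrtr_ge0. Qed.

Lemma vnorm_sqr q (v : 'cV[R]_q) : vnorm v ^+ 2 = \sum_k v k 0 ^+ 2.
Proof. by rewrite sqr_sqrtr ?sumr_sqr_ge0. Qed.

Lemma vnorm0 q : vnorm (0 : 'cV[R]_q) = 0.
Proof. by rewrite /vnorm big1 ?sqrtr0 // => k _; rewrite mxE expr0n. Qed.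

Lemma vnorm_eq0 q (v : 'cV[R]_q) : vnorm v = 0 -> v = 0.
Proof.
move=> v0; have sum0 : \sum_k v k 0 ^+ 2 = 0 by rewrite -vnorm_sqr v0 expr0n.
apply/matrixP => k j; rewrite (ord1 j) mxE; apply/eqP; rewrite -sqrf_eq0; apply/eqP.
by apply: (psumr_eq0P _ sum0) => // l _; apply: sqr_ge0.
Qed.

Lemma vnormZ q (a : R) (v : 'cV[R]_q) : vnorm (a *: v) = `|a| * vnorm v.
Proof.
rewrite /vnorm (eq_bigr (fun k => a ^+ 2 * v k 0 ^+ 2)); last first.
  by move=> k _; rewrite mxE exprMn.
by rewrite -mulr_sumr sqrtrM ?sqr_ge0 // sqrtr_sqr.
Qed.

Lemma ler_dot_vnorm q (u v : 'cV[R]_q) : \sum_k u k 0 * v k 0 <= vnorm u * vnorm v.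
Proof.
have uv_ge0 : 0 <= vnorm u * vnorm v by rewrite mulr_ge0 ?vnorm_ge0.
apply: le_trans (ler_norm _) _; rewrite -sqrtr_sqr -(ger0_norm uv_ge0) -sqrtr_sqr.
by rewrite ler_sqrt ?sqr_ge0 // exprMn !vnorm_sqr cauchy_schwarz.
Qed.

Lemma ler_vnormD q (u v : 'cV[R]_q) : vnorm (u + v) <= vnorm u + vnorm v.
Proof.
rewrite -(@ler_pXn2r _ 2) ?nnegrE ?addr_ge0 ?vnorm_ge0 //.
rewrite vnorm_sqr (eq_bigr (fun k => u k 0 ^+ 2 + 2 * (u k 0 * v k 0) + v k 0 ^+ 2));
  last by move=> k _; rewrite !mxE; ring.
rewrite !big_split /= -mulr_sumr -!vnorm_sqr.
have := ler_dot_vnorm u v; lra.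
Qed.

End VectorNorm.

Section OperatorNorm.
Variable R : realType.

Lemma vnorm_mulmx_le_frobenius p q (X : 'M[R]_(p, q)) (v : 'cV[R]_q) :
  vnorm (X *m v) <= Num.sqrt (\sum_i \sum_k X i k ^+ 2) * vnorm v.
Proof.
have XX_ge0 : 0 <= \sum_i \sum_k X i k ^+ 2.
  by apply: sumr_ge0 => i _; apply: sumr_sqr_ge0.
rewrite /vnorm -sqrtrM // ler_sqrt ?mulr_ge0 ?sumr_sqr_ge0 // mulr_suml.
apply: ler_sum => i _; rewrite mxE.
exact: cauchy_schwarz (fun k => X i k) (fun k => v k 0).
Qed.

Lemma opnorm_has_sup p q (X : 'M[R]_(p, q)) :
  has_sup [set vnorm (X *m v) | v in [set v : 'cV[R]_q | vnorm v <= 1]]%classic.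
Proof.
split; first by exists (vnorm (X *m 0)), 0; rewrite //= vnorm0 ler01.
exists (Num.sqrt (\sum_i \sum_k X i k ^+ 2)) => _ [v /= v_le1 <-].
by apply: le_trans (vnorm_mulmx_le_frobenius X v) _; rewrite ler_piMr ?sqrtr_ge0.
Qed.

Lemma vnorm_mulmx_le_opnorm p q (X : 'M[R]_(p, q)) v :
  vnorm v <= 1 -> vnorm (X *m v) <= opnorm X.
Proof. by move=> v_le1; apply: (sup_upper_bound (opnorm_has_sup X)); exists v. Qed.

Lemma opnorm_le p q (X : 'M[R]_(p, q)) c :
  (forall v, vnorm v <= 1 -> vnorm (X *m v) <= c) -> opnorm X <= c.
Proof.
move=> Xc; apply: ge_sup; first by exists (vnorm (X *m 0)), 0; rewrite //= vnorm0 ler01.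
by move=> _ [v /= v_le1 <-]; apply: Xc.
Qed.

Lemma opnorm_ge0 p q (X : 'M[R]_(p, q)) : 0 <= opnorm X.
Proof.
apply: le_trans (vnorm_ge0 (X *m 0)) (vnorm_mulmx_le_opnorm _ _).
by rewrite vnorm0 ler01.
Qed.

Lemma opnorm0 p q : opnorm (0 : 'M[R]_(p, q)) = 0.
Proof.
apply/le_anti; rewrite opnorm_ge0 andbT; apply: opnorm_le => v _.
by rewrite mul0mx vnorm0.
Qed.

Lemma ler_vnorm_mulmx p q (X : 'M[R]_(p, q)) v : vnorm (X *m v) <= opnorm X * vnorm v.
Proof.
have [v0|v_neq0] := eqVneq (vnorm v) 0.
  by rewrite v0 mulr0 (vnorm_eq0 v0) mulmx0 vnorm0.
have v_gt0 : 0 < vnorm v by rewrite lt_def v_neq0 vnorm_ge0.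
have := @vnorm_mulmx_le_opnorm _ _ X ((vnorm v)^-1 *: v).
rewrite -scalemxAr !vnormZ ger0_norm ?invr_ge0 ?vnorm_ge0 // mulVf // lexx.
by move/(_ isT); rewrite mulrC ler_pdivrMr.
Qed.

Lemma ler_opnormM p q r (X : 'M[R]_(p, q)) (Y : 'M[R]_(q, r)) :
  opnorm (X *m Y) <= opnorm X * opnorm Y.
Proof.
apply: opnorm_le => v v_le1; rewrite -mulmxA.
apply: le_trans (ler_vnorm_mulmx _ _) _; apply: ler_wpM2l; first exact: opnorm_ge0.
apply: le_trans (ler_vnorm_mulmx _ _) _.
by apply: ler_piMr; first exact: opnorm_ge0.
Qed.

Lemma ler_opnormD p q (X Y : 'M[R]_(p, q)) : opnorm (X + Y) <= opnorm X + opnorm Y.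
Proof.
apply: opnorm_le => v v_le1; rewrite mulmxDl.
by apply: le_trans (ler_vnormD _ _) _; apply: lerD; apply: vnorm_mulmx_le_opnorm.
Qed.

Lemma ler_opnorm_sum p q (I : Type) (r : seq I) (P : pred I) (F : I -> 'M[R]_(p, q)) :
  opnorm (\sum_(k <- r | P k) F k) <= \sum_(k <- r | P k) opnorm (F k).
Proof.
apply: (big_ind2 (fun X c => opnorm X <= c)) => //; first by rewrite opnorm0.
by move=> X1 c1 X2 c2 X1c1 X2c2; apply: le_trans (ler_opnormD _ _) (lerD X1c1 X2c2).
Qed.

Lemma ler_opnorm_tr p q (X : 'M[R]_(p, q)) : opnorm X^T <= opnorm X.
Proof.
apply: opnorm_le => v v_le1; set w := X^T *m v.
(* [|w|^2 = <X w, v>], so [|w|^2 <= |X| |w| |v|]. *)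
have w_sqr : vnorm w ^+ 2 <= opnorm X * vnorm w * vnorm v.
  have -> : vnorm w ^+ 2 = \sum_k (X *m w) k 0 * v k 0.
    rewrite vnorm_sqr (eq_bigr (fun k => \sum_j w k 0 * (X j k * v j 0))); last first.
      by move=> k _; rewrite expr2 {2}/w mxE mulr_sumr; apply: eq_bigr => j _; rewrite mxE.
    rewrite exchange_big; apply: eq_bigr => j _; rewrite mxE mulr_suml.
    by apply: eq_bigr => k _; ring.
  apply: le_trans (ler_dot_vnorm _ _) _; apply: ler_wpM2r; first exact: vnorm_ge0.
  exact: ler_vnorm_mulmx.
have w_le : vnorm w <= opnorm X * vnorm v.
  have [w0|w_neq0] := eqVneq (vnorm w) 0; first by rewrite w0 mulr_ge0 ?opnorm_ge0 ?vnorm_ge0.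
  have w_gt0 : 0 < vnorm w by rewrite lt_def w_neq0 vnorm_ge0.
  by rewrite -(ler_pM2l w_gt0) -expr2 mulrCA mulrA.
by apply: le_trans w_le _; apply: ler_piMr; first exact: opnorm_ge0.
Qed.

End OperatorNorm.

Section BlockNorm.
Variable R : realType.

Lemma opnorm_rowsub1_le1 m m' (f : 'I_m' -> 'I_m) :
  injective f -> opnorm (rowsub f 1%:M : 'M[R]_(m', m)) <= 1.
Proof.
move=> f_inj; apply: opnorm_le => v; apply: le_trans.
rewrite mul_rowsub_mx mul1mx /vnorm ler_sqrt ?sumr_sqr_ge0 //.
under eq_bigr do rewrite mxE.
rewrite -(big_imset (fun k => v k 0 ^+ 2) (h := f) (A := predT)) /=; last first.
  by move=> x y _ _; apply: f_inj.
rewrite [leRHS](bigID [in f @: predT]) /= lerDl.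
by apply: sumr_ge0 => k _; apply: sqr_ge0.
Qed.

Lemma ler_opnorm_mxsub p q p' q' (f : 'I_p' -> 'I_p) (g : 'I_q' -> 'I_q)
    (X : 'M[R]_(p, q)) :
  injective f -> injective g -> opnorm (mxsub f g X) <= opnorm X.
Proof.
move=> f_inj g_inj.
have -> : mxsub f g X = rowsub f 1%:M *m X *m (rowsub g 1%:M)^T.
  by rewrite trmx_mxsub trmx1 -mulmxA mulmx_colsub mulmx1 -mxsub_mul mul1mx.
have g_le1 := le_trans (ler_opnorm_tr _) (opnorm_rowsub1_le1 g_inj).
apply: le_trans (ler_opnormM _ _) _; rewrite -[leRHS]mulr1.
apply: ler_pM; rewrite ?opnorm_ge0 //.
apply: le_trans (ler_opnormM _ _) _; rewrite -[leRHS]mul1r.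
by apply: ler_pM; rewrite ?opnorm_ge0 ?opnorm_rowsub1_le1.
Qed.

Variables (N : nat) (p_ q_ r_ : 'I_N -> nat).

Lemma ler_opnorm_submxblock (X : 'M[R]_((\sum_i p_ i)%N, (\sum_i q_ i)%N)) l j :
  opnorm (submxblock X l j) <= opnorm X.
Proof.
by apply: ler_opnorm_mxsub => x y /eqP; rewrite -val_eqE tagnat.eq_Rank eqxx => /eqP /val_inj.
Qed.

Lemma submxblockM (X : 'M[R]_((\sum_i p_ i)%N, (\sum_i q_ i)%N))
    (Y : 'M[R]_((\sum_i q_ i)%N, (\sum_i r_ i)%N)) l j :
  submxblock (X *m Y) l j = \sum_k submxblock X l k *m submxblock Y k j.
Proof. by rewrite -{1}(submxblockK X) -{1}(submxblockK Y) mul_mxblock mxblockK. Qed.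

Lemma submxblock_tr (X : 'M[R]_((\sum_i p_ i)%N, (\sum_i q_ i)%N)) l j :
  submxblock X^T l j = (submxblock X j l)^T.
Proof. by rewrite /submxblock trmx_mxsub. Qed.

Lemma ler_opnorm_submxblockM (X : 'M[R]_((\sum_i p_ i)%N, (\sum_i q_ i)%N))
    (Y : 'M[R]_((\sum_i q_ i)%N, (\sum_i r_ i)%N)) l j :
  opnorm (submxblock (X *m Y) l j) <=
  \sum_k opnorm (submxblock X l k) * opnorm (submxblock Y k j).
Proof.
rewrite submxblockM; apply: le_trans (ler_opnorm_sum _ _ _) _.
by apply: ler_sum => k _; apply: ler_opnormM.
Qed.

End BlockNorm.

Section Decay.
Variable R : realType.

Definition decay (g : R) (x : nat) : R := expR (- g * x%:R).

Lemma decay_gt0 g x : 0 < decay g x.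
Proof. exact: expR_gt0. Qed.

Lemma decay_ge0 g x : 0 <= decay g x.
Proof. exact: ltW (decay_gt0 g x). Qed.

Lemma decay0 g : decay g 0 = 1.
Proof. by rewrite /decay mulr0 expR0. Qed.

Lemma decayD g x y : decay g (x + y) = decay g x * decay g y.
Proof. by rewrite /decay -expRD natrD mulrDr. Qed.

Lemma decay1X g x : decay g 1 ^+ x = decay g x.
Proof. by rewrite /decay -expRM_natr mulr1 mulrC. Qed.

Lemma decay_double g x : decay (2 * g) x = decay g x ^+ 2.
Proof. by rewrite /decay -expRM_natr; congr expR; ring. Qed.

Lemma decay_le g x y : 0 <= g -> (y <= x)%N -> decay g x <= decay g y.
Proof.
move=> g_ge0 yx; rewrite /decay ler_expR !mulNr lerN2.
by apply: ler_wpM2l; rewrite ?ler_nat.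
Qed.

Lemma decay_le_rate g g' x : g' <= g -> decay g x <= decay g' x.
Proof.
move=> g'g; rewrite /decay ler_expR !mulNr lerN2.
by apply: ler_wpM2r; rewrite ?ler0n.
Qed.

Lemma ler_sum_ord_const N (F : 'I_N -> R) c :
  (forall k, F k <= c) -> \sum_k F k <= N%:R * c.
Proof.
move=> Fc; apply: le_trans (ler_sum _ (fun k _ => Fc k)) _.
by rewrite sumr_const card_ord mulr_natl.
Qed.

End Decay.

Section BlockBound.
Variable R : realType.
Variables (N : nat) (dist : 'I_N -> 'I_N -> nat).
Hypothesis dist_triangle : forall j l r, (dist j r <= dist j l + dist l r)%N.

Definition block_bounded (p_ q_ : 'I_N -> nat)
    (X : 'M[R]_((\sum_i p_ i)%N, (\sum_i q_ i)%N)) (c : R) (w : 'I_N -> 'I_N -> R) :=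
  forall l j, opnorm (submxblock X l j) <= c * w l j.

(* [SED dist X c g] and [SED_away dist i X c g] are [block_bounded X c] with the
   first two profiles; the third describes the cost matrix localized at agent [i]. *)
Definition sed_profile (g : R) l j := decay g (dist l j).
Definition away_profile i (g : R) l j := decay g (maxn (dist i l) (dist i j)).
Definition around_profile i (g : R) l j := decay g (dist i l + dist i j).

Definition left_absorbing (g : R) (w : 'I_N -> 'I_N -> R) :=
  forall r l k, decay g (dist r l) * w r k <= w l k.
Definition right_absorbing (g : R) (w : 'I_N -> 'I_N -> R) :=
  forall l k j, w l k * decay g (dist k j) <= w l j.

Local Notation bmx a b := 'M[R]_((\sum_i a i)%N, (\sum_i b i)%N) (only parsing).

Lemma block_boundedD p_ q_ (X Y : bmx p_ q_) a b w :
  block_bounded X a w -> block_bounded Y b w -> block_bounded (X + Y) (a + b) w.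
Proof.
move=> Xa Yb l j; rewrite submxblockD mulrDl.
by apply: le_trans (ler_opnormD _ _) (lerD (Xa l j) (Yb l j)).
Qed.

Lemma block_bounded_le p_ q_ (X : bmx p_ q_) a b w :
  (forall l j, 0 <= w l j) -> a <= b -> block_bounded X a w -> block_bounded X b w.
Proof.
by move=> w_ge0 ab Xa l j; apply: le_trans (Xa l j) _; apply: ler_wpM2r.
Qed.

Lemma block_bounded_trmul p_ q_ r_ (X : bmx p_ q_) (P : bmx p_ r_) g a c w :
  0 <= a -> 0 <= c -> left_absorbing g w ->
  SED dist X a g -> block_bounded P c w -> block_bounded (X^T *m P) (N%:R * a * c) w.
Proof.
move=> a_ge0 c_ge0 w_left Xa Pc l k.
apply: le_trans (ler_opnorm_submxblockM _ _ _ _) _.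
rewrite -!mulrA; apply: ler_sum_ord_const => r; rewrite submxblock_tr.
have XTa := le_trans (ler_opnorm_tr _) (Xa r l).
apply: le_trans (ler_pM (opnorm_ge0 _) (opnorm_ge0 _) XTa (Pc r k)) _.
rewrite -mulrA; apply: (ler_wpM2l a_ge0).
by rewrite mulrCA; apply: (ler_wpM2l c_ge0); apply: w_left.
Qed.

Lemma block_bounded_mul p_ q_ r_ (P : bmx p_ q_) (Y : bmx q_ r_) g c b w :
  0 <= c -> 0 <= b -> right_absorbing g w ->
  block_bounded P c w -> SED dist Y b g -> block_bounded (P *m Y) (N%:R * c * b) w.
Proof.
move=> c_ge0 b_ge0 w_right Pc Yb l j.
apply: le_trans (ler_opnorm_submxblockM _ _ _ _) _.
rewrite -!mulrA; apply: ler_sum_ord_const => k.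
apply: le_trans (ler_pM (opnorm_ge0 _) (opnorm_ge0 _) (Pc l k) (Yb k j)) _.
rewrite -mulrA; apply: (ler_wpM2l c_ge0).
by rewrite mulrCA; apply: (ler_wpM2l b_ge0); apply: w_right.
Qed.

Lemma block_bounded_sandwich p_ q_ r_ (X : bmx p_ q_) (P : bmx p_ p_) (Y : bmx p_ r_)
    g a b c w :
  0 <= a -> 0 <= b -> 0 <= c -> left_absorbing g w -> right_absorbing g w ->
  SED dist X a g -> block_bounded P c w -> SED dist Y b g ->
  block_bounded (X^T *m P *m Y) (N%:R ^+ 2 * a * b * c) w.
Proof.
move=> a_ge0 b_ge0 c_ge0 w_left w_right Xa Pc Yb.
have -> : N%:R ^+ 2 * a * b * c = N%:R * (N%:R * a * c) * b by ring.
apply: (block_bounded_mul (g := g)); rewrite ?mulr_ge0 //.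
exact: block_bounded_trmul.
Qed.

Lemma sed_profile_right_absorbing g : 0 <= g -> right_absorbing g (sed_profile g).
Proof. by move=> g_ge0 l k j; rewrite -decayD; apply: decay_le. Qed.

Lemma around_profile_left_absorbing i g : 0 <= g -> left_absorbing g (around_profile i g).
Proof.
move=> g_ge0 r l k; rewrite /around_profile -decayD; apply: decay_le => //.
by have := dist_triangle i r l; lia.
Qed.

Lemma around_profile_right_absorbing i g : 0 <= g -> right_absorbing g (around_profile i g).
Proof.
move=> g_ge0 l k j; rewrite /around_profile -decayD; apply: decay_le => //.
by have := dist_triangle i k j; lia.
Qed.

Lemma away_profile_left_absorbing i g gP :
  0 <= gP -> gP <= g -> left_absorbing g (away_profile i gP).
Proof.
move=> gP_ge0 gPg r l k; rewrite /away_profile.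
apply: le_trans (ler_wpM2r (decay_ge0 _ _) (decay_le_rate _ gPg)) _.
rewrite -decayD; apply: decay_le => //.
by have := dist_triangle i r l; lia.
Qed.

Lemma away_profile_right_absorbing i g gP :
  0 <= gP -> gP <= g -> right_absorbing g (away_profile i gP).
Proof.
move=> gP_ge0 gPg l k j; rewrite /away_profile.
apply: le_trans (ler_wpM2l (decay_ge0 _ _) (decay_le_rate _ gPg)) _.
rewrite -decayD; apply: decay_le => //.
by have := dist_triangle i k j; lia.
Qed.

Lemma block_bounded_ge0 p_ q_ (X : bmx p_ q_) c w (l : 'I_N) :
  0 < w l l -> block_bounded X c w -> 0 <= c.
Proof.
by move=> w_gt0 Xc; have := le_trans (opnorm_ge0 _) (Xc l l); rewrite pmulr_lge0.
Qed.

Lemma SEDD p_ q_ (X Y : bmx p_ q_) a b g :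
  SED dist X a g -> SED dist Y b g -> SED dist (X + Y) (a + b) g.
Proof. exact: (block_boundedD (w := sed_profile g)). Qed.

Lemma SEDM p_ q_ r_ (X : bmx p_ q_) (Y : bmx q_ r_) a b g :
  0 <= g -> 0 <= a -> 0 <= b ->
  SED dist X a g -> SED dist Y b g -> SED dist (X *m Y) (N%:R * a * b) g.
Proof.
move=> g_ge0 a_ge0 b_ge0 Xa Yb.
exact: (block_bounded_mul (w := sed_profile g) a_ge0 b_ge0
          (sed_profile_right_absorbing g_ge0)).
Qed.

Lemma SEDX p_ (M : bmx p_ p_) c g :
  0 <= g -> 0 <= c -> SED dist M c g ->
  forall k, SED dist (M ^+ k.+1) (c * (N%:R * c) ^+ k) g.
Proof.
move=> g_ge0 c_ge0 Mc; elim=> [|k IH]; first by rewrite expr1 expr0 mulr1.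
rewrite exprSr -mulmxE.
have -> : c * (N%:R * c) ^+ k.+1 = N%:R * (c * (N%:R * c) ^+ k) * c.
  by rewrite exprSr; ring.
by apply: SEDM; rewrite ?mulr_ge0 ?exprn_ge0 ?mulr_ge0 ?ler0n.
Qed.

End BlockBound.

Section LocalCost.
Variable R : realType.
Variables (N : nat) (dist : 'I_N -> 'I_N -> nat).
Hypothesis dist_refl : forall j, dist j j = 0%N.
Hypothesis dist_triangle : forall j l r, (dist j r <= dist j l + dist l r)%N.
Variable i : 'I_N.

Lemma submxblock_keep_block p_ (X : 'M[R]_((\sum_i p_ i)%N)) l j :
  submxblock (keep_block i X) l j =
  if (l == i) && (j == i) then submxblock X l j else 0.
Proof. exact: mxblockK. Qed.

Lemma opnorm_submxblock_keep_block p_ (X : 'M[R]_((\sum_i p_ i)%N)) :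
  opnorm (submxblock X i i) <= opnorm (keep_block i X).
Proof.
by have := ler_opnorm_submxblock (keep_block i X) i i; rewrite submxblock_keep_block !eqxx.
Qed.

Lemma keep_block_bounded p_ (X : 'M[R]_((\sum_i p_ i)%N)) w :
  (forall l j, 0 <= w l j) -> w i i = 1 ->
  block_bounded (keep_block i X) (opnorm (submxblock X i i)) w.
Proof.
move=> w_ge0 wii l j; rewrite submxblock_keep_block.
case: ifP => [/andP[/eqP-> /eqP->] | _]; first by rewrite wii mulr1.
by rewrite opnorm0 mulr_ge0 ?opnorm_ge0.
Qed.

Lemma submxblock_trmul_submxcol m_ n_ (K : 'M[R]_((\sum_i m_ i)%N, (\sum_i n_ i)%N))
    (W : 'M[R]_(m_ i)) (a b : 'I_N) :
  submxblock ((submxcol K i)^T *m W *m submxcol K i) a b =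
  (submxblock K i a)^T *m W *m submxblock K i b.
Proof.
apply/matrixP => x y; rewrite !mxE; apply: eq_bigr => k _; rewrite !mxE; congr (_ * _).
by apply: eq_bigr => k' _; rewrite !mxE.
Qed.

Lemma local_cost_around m_ n_ (S : 'M[R]_((\sum_i n_ i)%N)) (W : 'M[R]_(m_ i))
    (K : 'M[R]_((\sum_i m_ i)%N, (\sum_i n_ i)%N)) cK g :
  SED dist K cK g ->
  block_bounded (keep_block i S + (submxcol K i)^T *m W *m submxcol K i)
    (opnorm (submxblock S i i) + opnorm W * cK ^+ 2) (around_profile dist i g).
Proof.
move=> K_SED; apply: block_boundedD.
  by apply: keep_block_bounded => [l j|]; rewrite /around_profile ?decay_ge0 ?dist_refl ?decay0.
move=> a b; rewrite submxblock_trmul_submxcol /around_profile decayD.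
apply: le_trans (ler_opnormM _ _) _.
apply: le_trans (ler_wpM2r (opnorm_ge0 _) (ler_opnormM _ _)) _.
have -> : opnorm W * cK ^+ 2 * (decay g (dist i a) * decay g (dist i b)) =
    cK * decay g (dist i a) * opnorm W * (cK * decay g (dist i b)) by ring.
apply: ler_pM; [by rewrite mulr_ge0 ?opnorm_ge0 | exact: opnorm_ge0 | | exact: K_SED].
by apply: ler_pM; rewrite ?opnorm_ge0 // (le_trans (ler_opnorm_tr _)).
Qed.

Lemma SED_away_sandwich p_ q_ r_ (X : 'M[R]_((\sum_i p_ i)%N, (\sum_i q_ i)%N))
    (P : 'M[R]_((\sum_i p_ i)%N)) (Y : 'M[R]_((\sum_i p_ i)%N, (\sum_i r_ i)%N))
    a b cP g gP :
  0 <= gP -> gP <= g -> 0 <= a -> 0 <= b -> 0 <= cP ->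
  SED dist X a g -> SED_away dist i P cP gP -> SED dist Y b g ->
  SED_away dist i (X^T *m P *m Y) (N%:R ^+ 2 * a * b * cP) gP.
Proof.
move=> gP_ge0 gPg a_ge0 b_ge0 cP_ge0.
exact: (block_bounded_sandwich a_ge0 b_ge0 cP_ge0
  (away_profile_left_absorbing dist_triangle i gP_ge0 gPg)
  (away_profile_right_absorbing dist_triangle i gP_ge0 gPg)).
Qed.

Lemma away_quadratic_form p_ q_ (X : 'M[R]_((\sum_i p_ i)%N, (\sum_i q_ i)%N))
    (Y : 'M[R]_((\sum_i q_ i)%N)) (P : 'M[R]_((\sum_i p_ i)%N)) a cP g gP :
  0 <= gP -> gP <= g -> 0 <= a -> 0 <= cP ->
  SED dist X a g -> SED_away dist i P cP gP ->
  SED_away dist i (keep_block i Y + X^T *m P *m X)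
    (opnorm (keep_block i Y) + N%:R ^+ 2 * a ^+ 2 * cP) gP.
Proof.
move=> gP_ge0 gPg a_ge0 cP_ge0 X_SED P_away.
have w_ge0 l j : 0 <= away_profile dist i gP l j by apply: decay_ge0.
apply: (block_boundedD (w := away_profile dist i gP)).
  apply: block_bounded_le (opnorm_submxblock_keep_block Y) _ => //.
  by apply: keep_block_bounded; rewrite // /away_profile dist_refl maxnn decay0.
rewrite [a ^+ 2]expr2 mulrA.
exact: (SED_away_sandwich gP_ge0 gPg a_ge0 a_ge0 cP_ge0 X_SED P_away X_SED).
Qed.

End LocalCost.

Section RealFacts.
Variable R : realType.

Lemma sum_geometric_le (s : R) k0 m : 0 <= s -> s < 1 ->
  \sum_(k0 <= k < k0 + m) s ^+ k <= s ^+ k0 / (1 - s).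
Proof.
move=> s_ge0 s_lt1.
have sumE : (1 - s) * \sum_(k0 <= k < k0 + m) s ^+ k = s ^+ k0 - s ^+ (k0 + m).
  elim: m => [|m IH]; first by rewrite addn0 big_geq // mulr0 subrr.
  rewrite addnS big_nat_recr /=; last by rewrite leq_addr.
  by rewrite mulrDr IH exprS; ring.
by rewrite ler_pdivlMr ?subr_gt0 // mulrC sumE gerBl exprn_ge0.
Qed.

Lemma sum_geometric_double (x : R) m :
  2 <= x -> \sum_(0 <= k < m.+1) x ^+ k <= 2 * x ^+ m.
Proof.
move=> x_ge2; elim: m => [|m IH]; first by rewrite big_nat1 expr0 mulr1 ler1n.
rewrite big_nat_recr //=; apply: le_trans (lerD IH (lexx _)) _.
have xm_ge0 : 0 <= x ^+ m by rewrite exprn_ge0 // (le_trans _ x_ge2).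
rewrite exprS -subr_ge0.
have -> : 2 * (x * x ^+ m) - (2 * x ^+ m + x * x ^+ m) = (x - 2) * x ^+ m by ring.
by rewrite mulr_ge0 // subr_ge0.
Qed.

Lemma ler_of_ler_add_decay (x b C g : R) k0 : 0 < g -> 0 <= C ->
  (forall n, (k0 <= n)%N -> x <= b + C * decay g n) -> x <= b.
Proof.
move=> g_gt0 C_ge0 xb; apply/ler_addgt0Pr => e e_gt0.
set t := C / (g * e); set n := maxn k0 (Num.truncn t).+1.
apply: le_trans (xb n (leq_maxl _ _)) _; rewrite lerD2l.
have t_lt_n : t < n%:R.
  by apply: lt_le_trans (truncnS_gt t) _; rewrite ler_nat leq_maxr.
(* [expR (g n) >= 1 + g n], so [decay g n <= 1 / (1 + g n)]. *)
have decay_n : decay g n * (1 + g * n%:R) <= 1.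
  rewrite mulrC; apply: le_trans (ler_wpM2r (decay_ge0 g n) (expR_ge1Dx (g * n%:R))) _.
  by rewrite /decay mulNr expRxMexpNx_1.
have Ct : C = t * (g * e) by rewrite /t divfK // gt_eqF ?mulr_gt0.
have t_le_n : t * (g * e) <= n%:R * (g * e).
  by apply: ler_wpM2r (ltW t_lt_n); rewrite mulr_ge0 // ltW.
have := decay_ge0 g n; rewrite Ct; nra.
Qed.

End RealFacts.

Section DecayRate.
Variable R : realType.
Variables (g rho L : R) (k D : nat).
Hypotheses (g_gt0 : 0 < g) (rho_gt0 : 0 < rho) (L_ge1 : 1 <= L).

Let den_gt0 : 0 < rho + ln L.
Proof. by rewrite ltr_wpDr // ln_ge0. Qed.

Let rate_den : rho * g / (rho + ln L) * (rho + ln L) = rho * g.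
Proof. by rewrite divfK // gt_eqF. Qed.

Lemma decay_rate_ge0 : 0 <= rho * g / (rho + ln L).
Proof. by rewrite divr_ge0 ?mulr_ge0 // ltW. Qed.

Lemma decay_rate_le : rho * g / (rho + ln L) <= g.
Proof. by rewrite ler_pdivrMr // mulrDr mulrC lerDl mulr_ge0 ?ln_ge0 // ltW. Qed.

Lemma growth_decay_le : 2 * k%:R * (rho + ln L) <= g * D%:R ->
  (L ^+ 2) ^+ k * decay g D <= decay (rho * g / (rho + ln L)) D.
Proof.
move=> kD; have L_gt0 : 0 < L by rewrite (lt_le_trans ltr01).
rewrite -[in X in X ^+ 2](lnK L_gt0) -exprM -expRM_natl /decay -expRD ler_expR natrM.
(* [nra] only reads the local context, so section hypotheses are restated there. *)
have lnL_ge0 := ln_ge0 L_ge1; have D_ge0 := ler0n R D; have k_ge0 := ler0n R k.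
have gP_den := rate_den; have den := den_gt0; have rho0 := rho_gt0.
set gP := rho * g / _ in gP_den *; nra.
Qed.

Lemma stable_decay_le : g * D%:R <= 2 * k%:R * (rho + ln L) ->
  decay (2 * rho) k <= decay (rho * g / (rho + ln L)) D.
Proof.
move=> kD; rewrite /decay ler_expR; have D_ge0 := ler0n R D.
have gP_den := rate_den; have den := den_gt0; have rho0 := rho_gt0.
set gP := rho * g / _ in gP_den *; nra.
Qed.

End DecayRate.

Lemma geometric_head_decay_tail_le (R : realType) (g rho L q0 A0 : R) (D : nat) :
  0 < g -> 0 < rho -> 2 <= L -> 0 <= q0 -> 0 <= A0 ->
  exists k0, (\sum_(0 <= k < k0) (L ^+ 2) ^+ k) * q0 * decay g D + A0 * decay (2 * rho) k0
             <= (A0 + 2 * q0) * decay (rho * g / (rho + ln L)) D.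
Proof.
move=> g_gt0 rho_gt0 L_ge2 q0_ge0 A0_ge0.
have L_ge1 : 1 <= L by apply: le_trans L_ge2; rewrite ler1n.
have den_gt0 : 0 < 2 * (rho + ln L) by rewrite mulr_gt0 // ltr_wpDr // ln_ge0.
set k := Num.truncn (g * D%:R / (2 * (rho + ln L))); exists k.+1.
have k_le : 2 * k%:R * (rho + ln L) <= g * D%:R.
  rewrite (mulrC 2) -mulrA -ler_pdivlMr // truncn_le.
  by apply: divr_ge0; [rewrite mulr_ge0 ?ler0n // ltW | apply: ltW].
have k_gt : g * D%:R <= 2 * k.+1%:R * (rho + ln L).
  rewrite (mulrC 2) -mulrA -ler_pdivrMr //; exact/ltW/truncnS_gt.
have L2_ge2 : 2 <= L ^+ 2.
  by rewrite expr2; apply: le_trans L_ge2 _; rewrite ler_peMl // (le_trans ler01).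
rewrite [leRHS]mulrDl [leRHS]addrC; apply: lerD; last first.
  by apply: (ler_wpM2l A0_ge0); apply: stable_decay_le.
apply: le_trans (_ : 2 * (L ^+ 2) ^+ k * q0 * decay g D <= _).
  exact: (ler_wpM2r (decay_ge0 _ _) (ler_wpM2r q0_ge0 (sum_geometric_double k L2_ge2))).
have -> : 2 * (L ^+ 2) ^+ k * q0 * decay g D = 2 * q0 * ((L ^+ 2) ^+ k * decay g D).
  by ring.
by apply: ler_wpM2l; [rewrite mulr_ge0 | apply: growth_decay_le].
Qed.

Section LyapunovSeries.
Variable R : realType.
Variables (n : nat) (M Q P : 'M[R]_n) (tau rho : R).
Hypothesis P_lyap : P = Q + M^T *m P *m M.
Hypothesis rho_gt0 : 0 < rho.
Hypothesis M_stable : mx_stable tau rho M.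

Definition lyap_term k := (M ^+ k)^T *m Q *m M ^+ k.

Lemma lyap_iter m : P = \sum_(0 <= k < m) lyap_term k + (M ^+ m)^T *m P *m M ^+ m.
Proof.
elim: m => [|m IH]; first by rewrite big_geq // add0r expr0 trmx1 mul1mx mulmx1.
rewrite big_nat_recr //= -addrA {1}IH; congr (_ + _).
rewrite [in LHS]P_lyap /lyap_term mulmxDr mulmxDl; congr (_ + _).
by rewrite exprS -!mulmxE trmx_mul !mulmxA.
Qed.

Lemma opnorm_conj_pow_le (X : 'M[R]_n) k :
  opnorm ((M ^+ k)^T *m X *m M ^+ k) <= tau ^+ 2 * opnorm X * decay (2 * rho) k.
Proof.
have Mk : opnorm (M ^+ k) <= tau * decay rho k := M_stable k.
have tau_decay_ge0 : 0 <= tau * decay rho k := le_trans (opnorm_ge0 _) Mk.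
apply: le_trans (ler_opnormM _ _) _.
apply: le_trans (ler_wpM2r (opnorm_ge0 _) (ler_opnormM _ _)) _.
have -> : tau ^+ 2 * opnorm X * decay (2 * rho) k =
    tau * decay rho k * opnorm X * (tau * decay rho k) by rewrite decay_double; ring.
apply: ler_pM; rewrite ?mulr_ge0 ?opnorm_ge0 //.
by apply: ler_pM; rewrite ?opnorm_ge0 // (le_trans (ler_opnorm_tr _)).
Qed.

Lemma opnorm_lyap_tail k0 m : (k0 <= m)%N ->
  opnorm (\sum_(k0 <= k < m) lyap_term k + (M ^+ m)^T *m P *m M ^+ m) <=
  tau ^+ 2 * opnorm Q * (decay (2 * rho) k0 / (1 - decay (2 * rho) 1)) +
  tau ^+ 2 * opnorm P * decay (2 * rho) m.
Proof.
move=> k0m; apply: le_trans (ler_opnormD _ _) (lerD _ (opnorm_conj_pow_le _ _)).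
apply: le_trans (ler_opnorm_sum _ _ _) _.
apply: le_trans (ler_sum _ (fun k _ => opnorm_conj_pow_le Q k)) _.
rewrite -mulr_sumr; apply: ler_wpM2l; first by rewrite mulr_ge0 ?sqr_ge0 ?opnorm_ge0.
under eq_bigr do rewrite -decay1X.
rewrite -(decay1X _ k0) -(subnKC k0m); apply: sum_geometric_le; first exact: decay_ge0.
by rewrite /decay expR_lt1 mulr1 oppr_lt0 mulr_gt0.
Qed.

End LyapunovSeries.

Section LyapunovAway.
Variable R : realType.
Variables (N : nat) (dist : 'I_N -> 'I_N -> nat).
Hypothesis dist_refl : forall j, dist j j = 0%N.
Hypothesis dist_triangle : forall j l r, (dist j r <= dist j l + dist l r)%N.
Variables (p_ : 'I_N -> nat) (M Q P : 'M[R]_((\sum_i p_ i)%N)).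
Variables (tau rho g c q0 : R) (i : 'I_N).
Hypothesis P_lyap : P = Q + M^T *m P *m M.
Hypothesis rho_gt0 : 0 < rho.
Hypothesis M_stable : mx_stable tau rho M.
Hypothesis g_gt0 : 0 < g.
Hypothesis c_ge1 : 1 <= c.
Hypothesis q0_ge0 : 0 <= q0.
Hypothesis M_SED : SED dist M c g.
Hypothesis Q_around : block_bounded Q q0 (around_profile dist i g).

Lemma lyap_block_le k0 l j :
  opnorm (submxblock P l j) <=
  \sum_(0 <= k < k0) opnorm (submxblock (lyap_term M Q k) l j) +
  tau ^+ 2 * opnorm Q * (decay (2 * rho) k0 / (1 - decay (2 * rho) 1)).
Proof.
have rho2_gt0 : 0 < 2 * rho by rewrite mulr_gt0.
apply: (ler_of_ler_add_decay (C := tau ^+ 2 * opnorm P) (k0 := k0) rho2_gt0).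
  by rewrite mulr_ge0 ?sqr_ge0 ?opnorm_ge0.
move=> m k0m; rewrite -[leRHS]addrA.
rewrite {1}(lyap_iter P_lyap m) (@big_cat_nat _ _ _ k0 0 m _ _ (leq0n k0) k0m) /=.
rewrite -addrA submxblockD.
apply: le_trans (ler_opnormD _ _) (lerD _ _).
  rewrite (big_morph (fun X => submxblock X l j) (fun X Y => submxblockD X Y l j)
             (submxblock0 l j)).
  exact: ler_opnorm_sum.
apply: le_trans (ler_opnorm_submxblock _ l j) _.
exact: opnorm_lyap_tail.
Qed.

Lemma lyap_term_around k :
  block_bounded (lyap_term M Q k) (((N%:R * c) ^+ 2) ^+ k * q0) (around_profile dist i g).
Proof.
case: k => [|k]; first by rewrite /lyap_term expr0 trmx1 mul1mx mulmx1 expr0 mul1r.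
have c_ge0 : 0 <= c := le_trans ler01 c_ge1.
have g_ge0 := ltW g_gt0.
have a_ge0 : 0 <= c * (N%:R * c) ^+ k by rewrite mulr_ge0 ?exprn_ge0 ?mulr_ge0.
have -> : ((N%:R * c) ^+ 2) ^+ k.+1 * q0 =
    N%:R ^+ 2 * (c * (N%:R * c) ^+ k) * (c * (N%:R * c) ^+ k) * q0.
  by rewrite exprSr exprAC; set z := (N%:R * c) ^+ k; ring.
have Mk := SEDX dist_triangle g_ge0 c_ge0 M_SED k.
exact: (block_bounded_sandwich a_ge0 a_ge0 q0_ge0
  (around_profile_left_absorbing dist_triangle i g_ge0)
  (around_profile_right_absorbing dist_triangle i g_ge0) Mk Q_around Mk).
Qed.

Lemma lyap_SED_away :
  SED_away dist i P (opnorm Q * tau ^+ 2 / (1 - expR (- 2 * rho)) + 2 * q0)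
    (rho * g / (rho + ln (N%:R * c))).
Proof.
move=> l j; set L := N%:R * c; set gP := rho * g / _; set D := maxn _ _.
set A0 := opnorm Q * tau ^+ 2 / _.
change (opnorm (submxblock P l j) <= (A0 + 2 * q0) * decay gP D).
have A0_ge0 : 0 <= A0.
  apply: divr_ge0; first by rewrite mulr_ge0 ?opnorm_ge0 ?sqr_ge0.
  by rewrite subr_ge0 expR_le1 mulNr oppr_le0 mulr_ge0 // ltW.
have L_ge0 : 0 <= L by rewrite mulr_ge0 ?ler0n // (le_trans ler01).
have head_tail k0 : opnorm (submxblock P l j) <=
    (\sum_(0 <= k < k0) (L ^+ 2) ^+ k) * q0 * decay g D + A0 * decay (2 * rho) k0.
  apply: le_trans (lyap_block_le k0 l j) _; apply: lerD.
    rewrite !mulr_suml; apply: ler_sum => k _; apply: le_trans (lyap_term_around k l j) _.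
    apply: ler_wpM2l; first by rewrite mulr_ge0 ?exprn_ge0 ?sqr_ge0.
    by apply: decay_le; [exact: ltW | rewrite geq_max leq_addr leq_addl].
  have e2 : expR (- 2 * rho) = decay (2 * rho) 1 by rewrite /decay; congr expR; ring.
  by rewrite /A0 e2 le_eqVlt; apply/orP; left; apply/eqP; ring.
have [D0 | D_gt0] := posnP D.
  apply: le_trans (head_tail 0%N) _.
  by rewrite big_geq // !mul0r add0r D0 !decay0 !mulr1 lerDl mulr_ge0.
(* Some agent differs from [i], so there are at least two agents and [L >= 2]. *)
have N_ge2 : (2 <= N)%N.
  rewrite leqNgt; apply/negP => N_lt2; move: D_gt0; rewrite /D.
  have agent_eq (a : 'I_N) : a = i.
    by apply: ord_inj; have := ltn_ord a; have := ltn_ord i; lia.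
  by rewrite (agent_eq l) (agent_eq j) dist_refl.
have L_ge2 : 2 <= L.
  apply: le_trans (_ : N%:R <= L); first by rewrite ler_nat.
  by rewrite ler_peMr ?ler0n.
have [k0 k0_le] := geometric_head_decay_tail_le D g_gt0 rho_gt0 L_ge2 q0_ge0 A0_ge0.
exact: le_trans (head_tail k0) k0_le.
Qed.

End LyapunovAway.

Lemma lqr_lyap_SED_away (R : realType) (N : nat) (dist : 'I_N -> 'I_N -> nat)
    (n_ m_ : 'I_N -> nat) (i : 'I_N) (A S P : 'M[R]_((\sum_i n_ i)%N))
    (B : 'M[R]_((\sum_i n_ i)%N, (\sum_i m_ i)%N))
    (K : 'M[R]_((\sum_i m_ i)%N, (\sum_i n_ i)%N)) (W : 'M[R]_(m_ i))
    (g cA cB cK tau rho : R) :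
  (forall j, dist j j = 0%N) -> (forall j l r, (dist j r <= dist j l + dist l r)%N) ->
  0 < g -> 1 <= cA -> 0 <= cB -> 0 < rho ->
  SED dist A cA g -> SED dist B cB g -> SED dist K cK g ->
  mx_stable tau rho (A + B *m K) ->
  let Q := keep_block i S + (submxcol K i)^T *m W *m submxcol K i in
  P = Q + (A + B *m K)^T *m P *m (A + B *m K) ->
  SED_away dist i P
    (opnorm Q * tau ^+ 2 / (1 - expR (- 2 * rho)) +
     2 * (opnorm (submxblock S i i) + opnorm W * cK ^+ 2))
    (rho * g / (rho + ln (N%:R * cA + N%:R ^+ 2 * cB * cK))).
Proof.
move=> dist_refl dist_triangle g_gt0 cA_ge1 cB_ge0 rho_gt0 A_SED B_SED K_SED M_stable
  Q P_lyap.
have cK_ge0 : 0 <= cK := block_bounded_ge0 (l := i) (decay_gt0 _ _) K_SED.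
have cBK_ge0 : 0 <= N%:R * cB * cK by rewrite !mulr_ge0 ?ler0n.
have c_ge1 : 1 <= cA + N%:R * cB * cK by rewrite -[leLHS]addr0; apply: lerD.
have M_SED : SED dist (A + B *m K) (cA + N%:R * cB * cK) g.
  apply: SEDD => //; apply: SEDM => //; exact: ltW.
have -> : N%:R * cA + N%:R ^+ 2 * cB * cK = N%:R * (cA + N%:R * cB * cK) by ring.
apply: (lyap_SED_away dist_refl dist_triangle P_lyap rho_gt0 M_stable g_gt0 c_ge1 _ M_SED).
  by rewrite addr_ge0 ?mulr_ge0 ?opnorm_ge0 ?sqr_ge0.
exact (local_cost_around dist_refl S W K_SED).
Qed.

Theorem corollary1 (R : realType) (N : nat) (dist : 'I_N -> 'I_N -> nat)
  (n_ m_ : 'I_N -> nat)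
  (A : 'M[R]_((\sum_i n_ i)%N, (\sum_i n_ i)%N))
  (B : 'M[R]_((\sum_i n_ i)%N, (\sum_i m_ i)%N))
  (K : 'M[R]_((\sum_i m_ i)%N, (\sum_i n_ i)%N))
  (S : 'M[R]_((\sum_i n_ i)%N, (\sum_i n_ i)%N))
  (Rm : 'M[R]_((\sum_i m_ i)%N, (\sum_i m_ i)%N))
  (gamma_sys c_A c_B c_K tau rho : R) (kappa : nat) (i : 'I_N)
  (P : 'M[R]_((\sum_i n_ i)%N, (\sum_i n_ i)%N)) :
  (forall j, dist j j = 0%N) ->
  (forall j l, dist j l = dist l j) ->
  (forall j l r, (dist j r <= dist j l + dist l r)%N) ->
  0 < gamma_sys -> (1 <= kappa)%N ->
  block_diag S -> block_diag Rm ->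
  (forall j, psd (submxblock S j j)) -> (forall j, pd (submxblock Rm j j)) ->
  1 <= c_A -> 1 <= c_B ->
  SED dist A c_A gamma_sys -> SED dist B c_B gamma_sys ->
  in_Kkappa dist kappa K -> SED dist K c_K gamma_sys ->
  0 < rho -> mx_stable tau rho (A + B *m K) ->
  let Si := keep_block i S in
  let Ri := keep_block i Rm in
  let Ki := submxcol K i in
  let Q := Si + Ki^T *m submxblock Rm i i *m Ki in
  P = Q + (A + B *m K)^T *m P *m (A + B *m K) ->
  let c_P := opnorm Q * tau ^+ 2 / (1 - expR (- 2 * rho))
             + 2 * (opnorm (submxblock S i i) + opnorm (submxblock Rm i i) * c_K ^+ 2) in
  let gamma_P := rho * gamma_sys / (rho + ln (N%:R * c_A + N%:R ^+ 2 * c_B * c_K)) in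
  let c_H := Num.max (opnorm Si + N%:R ^+ 2 * c_A ^+ 2 * c_P)
               (Num.max (N%:R ^+ 2 * c_A * c_B * c_P)
                        (opnorm Ri + N%:R ^+ 2 * c_B ^+ 2 * c_P)) in
  SED_away dist i (Si + A^T *m P *m A) c_H gamma_P /\
  SED_away dist i (A^T *m P *m B) c_H gamma_P /\
  SED_away dist i (Ri + B^T *m P *m B) c_H gamma_P.
Proof.
move=> dist_refl _ dist_triangle g_gt0 _ _ _ _ _ cA_ge1 cB_ge1 A_SED B_SED _ K_SED
  rho_gt0 M_stable Si Ri Ki Q P_lyap c_P gamma_P c_H.
have cA_ge0 : 0 <= c_A := le_trans ler01 cA_ge1.
have cB_ge0 : 0 <= c_B := le_trans ler01 cB_ge1.
have P_away : SED_away dist i P c_P gamma_P := lqr_lyap_SED_away dist_refl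
  dist_triangle g_gt0 cA_ge1 cB_ge0 rho_gt0 A_SED B_SED K_SED M_stable P_lyap.
have cK_ge0 : 0 <= c_K := block_bounded_ge0 (l := i) (decay_gt0 _ _) K_SED.
have L_ge1 : 1 <= N%:R * c_A + N%:R ^+ 2 * c_B * c_K.
  rewrite -[leLHS]addr0; apply: lerD; last by rewrite !mulr_ge0 ?exprn_ge0 ?ler0n.
  by apply: mulr_ege1 => //; rewrite ler1n (leq_ltn_trans (leq0n i) (ltn_ord i)).
have gP_ge0 : 0 <= gamma_P by apply: decay_rate_ge0.
have gP_le : gamma_P <= gamma_sys by apply: decay_rate_le.
have cP_ge0 : 0 <= c_P := block_bounded_ge0 (l := i) (decay_gt0 _ _) P_away.
have w_ge0 l j : 0 <= away_profile dist i gamma_P l j by apply: decay_ge0.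
have H11 : SED_away dist i (Si + A^T *m P *m A)
    (opnorm Si + N%:R ^+ 2 * c_A ^+ 2 * c_P) gamma_P.
  exact (away_quadratic_form dist_refl dist_triangle S gP_ge0 gP_le cA_ge0 cP_ge0 A_SED P_away).
have H12 := SED_away_sandwich dist_triangle gP_ge0 gP_le cA_ge0 cB_ge0 cP_ge0
  A_SED P_away B_SED.
have H22 : SED_away dist i (Ri + B^T *m P *m B)
    (opnorm Ri + N%:R ^+ 2 * c_B ^+ 2 * c_P) gamma_P.
  exact (away_quadratic_form dist_refl dist_triangle Rm gP_ge0 gP_le cB_ge0 cP_ge0 B_SED P_away).
split; [|split].
- by apply: (block_bounded_le w_ge0 _ H11); rewrite /c_H !le_max lexx.
- by apply: (block_bounded_le w_ge0 _ H12); rewrite /c_H !le_max lexx orbT.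
- by apply: (block_bounded_le w_ge0 _ H22); rewrite /c_H !le_max lexx !orbT.
Qed.
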